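(* Let $k\ge 1$, $n\ge 2$, and let $s,t\in S(n,k)$ be compatible. Let $\alpha$ be the number of occurrences in $s$ of a most frequent symbol of $s$. Then $d(s,t)\le 2(n-\alpha)$.
   Context: Strings here are arbitrary (not normalized) finite words. The prefix reversal (flip) $f^{(i)}$ applied to $s=s_1\cdots s_n$ ($1\le i\le n$) yields $s_i s_{i-1}\cdots s_1 s_{i+1}\cdots s_n$. Two strings are \emph{compatible} if each symbol occurs the same number of times in both. For compatible $s,t$, $d(s,t)$ is the minimum number of prefix reversals transforming $s$ into $t$. $S(n,k)$ is the set of strings of length $n$ whose set of occurring symbols is exactly $\{0,\dots,k-1\}$. *)

From mathcomp Require Import all_boot.
Set Implicit Arguments. Unset Strict Implicit. Unset Printing Implicit Defensive.

(* prefix reversal f^(i): s_i ... s_1 s_{i+1} ... s_n  (meaningful for 1 <= i <= size s) *)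
Definition flip (i : nat) (s : seq nat) : seq nat := rev (take i s) ++ drop i s.

Fixpoint reach (m : nat) (s t : seq nat) : Prop :=
  match m with
  | 0 => s = t
  | m'.+1 => exists i, 1 <= i <= size s /\ reach m' (flip i s) t
  end.

Definition compatible (s t : seq nat) : Prop := forall a, count_mem a s = count_mem a t.

(* d(s,t) <= m : some sequence of at most m prefix reversals turns s into t *)
Definition dist_le (s t : seq nat) (m : nat) : Prop := exists2 j, j <= m & reach j s t.

Definition inS (n k : nat) (s : seq nat) : Prop :=
  size s = n /\ (forall a, (a \in s) = (a < k)).

Definition maxfreq (s : seq nat) : nat := \max_(a <- s) count_mem a s.

From mathcomp Require Import all_boot.
Set Implicit Arguments. Unset Strict Implicit.

(* Fix the strings from the right.  Two flips bring any symbol of a string to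
   its end (first to the front, then reverse the whole string).  If the last
   symbols of s and t differ, one of them, say the last symbol y of t, is not
   the fixed symbol a; bring y to the end of s and recurse on the prefixes.
   Thus only positions not holding a cost flips, at most two each, and
   d(s,t) <= 2 (n - #a); take a most frequent symbol for a. *)

Lemma size_flip i s : size (flip i s) = size s.
Proof. by rewrite /flip size_cat size_rev -size_cat cat_take_drop. Qed.

Lemma flipK i s : i <= size s -> flip i (flip i s) = s.
Proof.
move=> le_i_s; have size_rev_take : size (rev (take i s)) = i.
  by rewrite size_rev size_take_min; apply/minn_idPl.
rewrite /flip take_cat drop_cat size_rev_take ltnn subnn take0 drop0 cats0.
by rewrite revK cat_take_drop.
Qed.

Lemma flip_cat i s w : i <= size s -> flip i (s ++ w) = flip i s ++ w.
Proof.
rewrite leq_eqVlt => /orP[/eqP-> | lt_i_s]; rewrite /flip take_cat drop_cat.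
  by rewrite ltnn subnn take0 drop0 cats0 take_size drop_size cats0.
by rewrite lt_i_s catA.
Qed.

Lemma perm_flip i s : perm_eq (flip i s) s.
Proof. by rewrite -[in X in perm_eq _ X](cat_take_drop i s) perm_cat2r perm_rev. Qed.

Lemma reach_perm m s t : reach m s t -> perm_eq s t.
Proof.
elim: m s => [s -> // | m IH s [i [_ /IH]]].
by apply: perm_trans; rewrite perm_sym perm_flip.
Qed.

Lemma reach_cat m s t w : reach m s t -> reach m (s ++ w) (t ++ w).
Proof.
elim: m s => [s -> // | m IH s [i [/andP[i_gt0 le_i_s] /IH]]].
exists i; rewrite size_cat i_gt0 flip_cat //; split=> //.
exact: leq_trans le_i_s (leq_addr _ _).
Qed.

Lemma reach_add m p s u t : reach m s u -> reach p u t -> reach (m + p) s t.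
Proof.
elim: m s => [s -> // | m IH s [i [range_i reach_m]] reach_p].
by exists i; split; last exact: IH reach_m reach_p.
Qed.

Lemma reach_sym m s t : reach m s t -> reach m t s.
Proof.
elim: m s => [s -> // | m IH s [i [/andP[i_gt0 le_i_s] /IH reach_back]]].
rewrite -addn1; apply: reach_add reach_back _.
by exists i; rewrite size_flip i_gt0 le_i_s flipK.
Qed.

Lemma dist_le_refl s : dist_le s s 0.
Proof. by exists 0. Qed.

Lemma dist_le_mono s t m p : m <= p -> dist_le s t m -> dist_le s t p.
Proof. by move=> le_m_p [j le_j_m reach_j]; exists j; first exact: leq_trans le_m_p. Qed.

Lemma dist_le_perm s t m : dist_le s t m -> perm_eq s t.
Proof. by case=> j _ /reach_perm. Qed.

Lemma dist_le_sym s t m : dist_le s t m -> dist_le t s m.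
Proof. by case=> j le_j_m /reach_sym; exists j. Qed.

Lemma dist_le_trans s u t m p :
  dist_le s u m -> dist_le u t p -> dist_le s t (m + p).
Proof.
case=> j le_j_m reach_j [l le_l_p reach_l].
by exists (j + l); [exact: leq_add | exact: reach_add reach_l].
Qed.

Lemma dist_le_rcons s t x m : dist_le s t m -> dist_le (rcons s x) (rcons t x) m.
Proof. by case=> j le_j_m /(reach_cat [:: x]); rewrite !cats1; exists j. Qed.

Lemma dist_le_move_last x s : x \in s -> exists u, dist_le s (rcons u x) 2.
Proof.
move=> s_x; have lt_ix_s : index x s < size s by rewrite index_mem.
set r := rev (take (index x s) s) ++ drop (index x s).+1 s.
have flip_to_front : flip (index x s).+1 s = x :: r.
  by rewrite /flip (take_nth x lt_ix_s) nth_index // rev_rcons.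
have size_r : size (x :: r) = size s by rewrite -flip_to_front size_flip.
exists (rev r), 2 => //; exists (index x s).+1; split=> //.
exists (size s); rewrite size_flip leqnn (leq_ltn_trans _ lt_ix_s) //.
by rewrite flip_to_front /flip -size_r take_size drop_size cats0 rev_cons.
Qed.

Lemma perm_rcons2 (T : eqType) (s t : seq T) x : perm_eq (rcons s x) (rcons t x) = perm_eq s t.
Proof. by rewrite -!cats1 perm_cat2r. Qed.

Lemma count_neq_rcons (a x : nat) s :
  count (predC1 a) (rcons s x) = count (predC1 a) s + (x != a).
Proof. by rewrite -cats1 count_cat /= addn0. Qed.

Lemma dist_le_count_neq a s t :
  perm_eq s t -> dist_le s t (2 * count (predC1 a) s).
Proof.
move: {2}(size s) (erefl (size s)) => n.
elim: n s t => [|n IH] s t size_s s_t.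
  by move: size_s s_t => /size0nil->; rewrite perm_sym => /perm_nilP->; apply: dist_le_refl.
have size_t := perm_size s_t; rewrite size_s in size_t.
case/lastP: s size_s s_t => [// | s x]; case/lastP: t size_t => [// | t y].
rewrite !size_rcons => -[/esym size_t] [size_s] s_t.
have [eq_xy | neq_xy] := eqVneq x y.
  subst y; rewrite perm_rcons2 in s_t; apply: dist_le_rcons.
  by apply: dist_le_mono (IH _ _ size_s s_t); rewrite count_neq_rcons leq_mul2l leq_addr.
wlog neq_ya : s t x y size_s size_t s_t neq_xy / y != a.
  move=> gen; have [eq_ya | ] := eqVneq y a; last exact: gen.
  rewrite (permP s_t); apply/dist_le_sym/gen; rewrite 1?perm_sym 1?eq_sym //.
  by rewrite -eq_ya eq_sym.
have y_sx : y \in rcons s x by rewrite (perm_mem s_t) mem_rcons mem_head.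
have [u move_y] := dist_le_move_last y_sx.
have s_uy := dist_le_perm move_y.
have u_t : perm_eq u t by rewrite -(perm_rcons2 _ _ y) -(permPl s_uy).
have size_u : size u = n by rewrite -size_t (perm_size u_t).
rewrite (permP s_uy) count_neq_rcons neq_ya mulnDr muln1 addnC.
exact: dist_le_trans move_y (dist_le_rcons _ (IH _ _ size_u u_t)).
Qed.

Lemma maxfreq_le_count s : exists a, maxfreq s <= count_mem a s.
Proof.
rewrite /maxfreq; elim/big_rec: _ => [|x v _ [a le_v_a]]; first by exists 0.
by case: (leqP (count_mem x s) v) => _; [exists a | exists x].
Qed.

Theorem lemma5p2 (n k : nat) (s t : seq nat) :
  1 <= k -> 2 <= n -> inS n k s -> inS n k t -> compatible s t ->
  dist_le s t (2 * (n - maxfreq s)).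
Proof.
move=> _ _ [size_s _] _ compat_st.
have s_t : perm_eq s t by apply/allP => x _; apply/eqP; exact: compat_st.
have [a le_max_a] := maxfreq_le_count s.
apply: dist_le_mono (dist_le_count_neq a s_t).
by rewrite leq_mul2l -size_s -(count_predC (pred1 a) s) -addnBAC // leq_addl orbT.
Qed.
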